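(* Let $K$ be a class of partial functions from $\mathbb{N}^k$ to $\mathbb{N}$ (of various arities $k\ge 1$) satisfying the following three conditions: (1) (Closure) $K$ contains all partial recursive functions and is closed under substitution (composition), primitive recursion and the $\mu$-operator (minimization). (2) (Computation records) For every unary function $f\in K$ there exist a set $M\subseteq\mathbb{N}$ and unary functions $\alpha,\omega\in K$ whose domains contain $M$, such that (a) the indicator function of $M$ (equal to $1$ on $M$ and $0$ outside $M$) belongs to $K$, and (b) for all $x,y\in\mathbb{N}$, $f(x)$ is defined and equals $y$ if and only if there exists $m\in M$ with $\alpha(m)=x$ and $\omega(m)=y$. (3) (Programs) There exists a binary function $F\in K$ that is universal for the unary functions in $K$: for every unary $f\in K$ there is $n\in\mathbb{N}$ such that the function $x\mapsto F(n,x)$ coincides with $f$ (as partial functions). Then there exists a set $A\subseteq\mathbb{N}$ such that $K$ is exactly the class of all partial functions that are partial recursive relative to the oracle set $A$.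
   Context: Substitution, primitive recursion and minimization are the usual operations on partial functions of natural arguments. A partial function is partial recursive relative to a set $A\subseteq\mathbb{N}$ if it is computable by an oracle machine with oracle $A$ (equivalently, its graph is recursively enumerable relative to $A$). *)

From mathcomp Require Import all_boot.
Set Implicit Arguments.
Unset Strict Implicit.
Unset Printing Implicit Defensive.

Definition pfun (k : nat) := k.-tuple nat -> option nat.

(* f is the substitution h(g_1, ..., g_m) (strict semantics). *)
Definition comp_spec (m n : nat) (h : pfun m) (gs : 'I_m -> pfun n) (f : pfun n) :=
  forall (x : n.-tuple nat) (y : nat), f x = Some y <->
    exists vs : m.-tuple nat, (forall i, gs i x = Some (tnth vs i)) /\ h vs = Some y.

Fixpoint prec_aux (n : nat) (g : pfun n) (h : pfun n.+2) (x : n.-tuple nat) (y : nat)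
  : option nat :=
  match y with
  | 0 => g x
  | y'.+1 => match prec_aux g h x y' with
             | Some v => h [tuple of rcons [tuple of rcons x y'] v]
             | None => None
             end
  end.

Definition primrec_spec (n : nat) (g : pfun n) (h : pfun n.+2) (f : pfun n.+1) :=
  forall (x : n.-tuple nat) (y : nat), f [tuple of rcons x y] = prec_aux g h x y.

Definition mu_spec (n : nat) (g : pfun n.+1) (f : pfun n) :=
  forall (x : n.-tuple nat) (y : nat), f x = Some y <->
    g [tuple of rcons x y] = Some 0 /\
    (forall z, z < y -> exists v, g [tuple of rcons x z] = Some v.+1).

Inductive PRgen (O : option (nat -> bool)) : forall k, pfun k -> Prop :=
| PR_zero k : @PRgen O k (fun _ => Some 0)
| PR_succ : @PRgen O 1 (fun x => Some (thead x).+1)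
| PR_proj k (i : 'I_k) : @PRgen O k (fun x => Some (tnth x i))
| PR_oracle (A : nat -> bool) : O = Some A ->
    @PRgen O 1 (fun x => Some (nat_of_bool (A (thead x))))
| PR_comp m n (h : pfun m) (gs : 'I_m -> pfun n) (f : pfun n) :
    PRgen O h -> (forall i, PRgen O (gs i)) -> comp_spec h gs f -> PRgen O f
| PR_prim n (g : pfun n) (h : pfun n.+2) (f : pfun n.+1) :
    PRgen O g -> PRgen O h -> primrec_spec g h f -> PRgen O f
| PR_mu n (g : pfun n.+1) (f : pfun n) :
    PRgen O g -> mu_spec g f -> PRgen O f.

Definition partial_recursive k (f : pfun k) := PRgen None f.
Definition partial_recursive_in (A : nat -> bool) k (f : pfun k) := PRgen (Some A) f.

(* A class of partial functions; only arities k >= 1 are meaningful. *)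
Definition pclass := forall k, pfun k -> Prop.

Definition unary (f : pfun 1) (x : nat) : option nat := f [tuple x].

(* Let [F] be universal for the unary functions of [K] and let [M], [al], [om] be
   computation records of its uncurried form [G (cpair n x) = F n x].  The oracle is the
   set of codes [cpair m (cpair x y)] with [M m], [al m = x] and [om m = y].  Its
   characteristic function is in [K], so every function recursive in the oracle is in [K]
   (by induction on its definition).  Conversely [G] is recursive in the oracle by
   searching for a code with first component [x], hence so is every unary [f] of [K],
   which is [G (cpair n _)] for a program [n]; pairing the last two arguments reduces
   all arities to the unary case. *)

From mathcomp Require Import all_boot zify.
From Stdlib Require Import FunctionalExtensionality ClassicalEpsilon Lia.
From Stdlib Require List.

Set Implicit Arguments.
Unset Strict Implicit.
Unset Printing Implicit Defensive.

Definition comp_closed (C : pclass) :=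
  forall m n (h : pfun m) (gs : 'I_m -> pfun n) (f : pfun n),
    0 < m -> 0 < n -> C m h -> (forall i, C n (gs i)) -> comp_spec h gs f -> C n f.

Definition primrec_closed (C : pclass) :=
  forall n (g : pfun n) (h : pfun n.+2) (f : pfun n.+1),
    0 < n -> C n g -> C n.+2 h -> primrec_spec g h f -> C n.+1 f.

Definition mu_closed (C : pclass) :=
  forall n (g : pfun n.+1) (f : pfun n), 0 < n -> C n.+1 g -> mu_spec g f -> C n f.

Definition contains_pr (C : pclass) :=
  forall k (f : pfun k), 0 < k -> partial_recursive f -> C k f.

Lemma PRgen_comp_closed O : comp_closed (@PRgen O).
Proof. by move=> m n h gs f _ _ Hh Hgs; apply: PR_comp Hh Hgs. Qed.

Lemma PRgen_contains_pr O : contains_pr (@PRgen O).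
Proof.
move=> k f _; elim=> {k f} //.
- exact: PR_zero.
- exact: PR_succ.
- exact: PR_proj.
- by move=> m n h gs f _ Hh _ Hgs; apply: PR_comp.
- by move=> n g h f _ Hg _ Hh; apply: PR_prim.
- by move=> n g f _ Hg; apply: PR_mu.
Qed.

Lemma mu_exists n (g : pfun n.+1) : exists f : pfun n, mu_spec g f.
Proof.
pose Q (x : n.-tuple nat) y := g [tuple of rcons x y] = Some 0 /\
  forall z, z < y -> exists v, g [tuple of rcons x z] = Some v.+1.
have Q_uniq x y1 y2 : Q x y1 -> Q x y2 -> y1 = y2.
  case=> [H1 H1'] [H2 H2']; case: (ltngtP y1 y2) => // Hlt.
  - by case: (H2' _ Hlt) => v; rewrite H1.
  - by case: (H1' _ Hlt) => v; rewrite H2.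
exists (fun x => match excluded_middle_informative (exists y, Q x y) with
                 | left H => Some (proj1_sig (constructive_indefinite_description _ H))
                 | right _ => None end).
move=> x y; case: excluded_middle_informative => [H|H].
- case: constructive_indefinite_description => y0 Hy0 /=.
  by split=> [[<-] //|Hy]; rewrite (Q_uniq _ _ _ Hy0 Hy).
- by split=> // Hy; case: H; exists y.
Qed.

Lemma mu_least (q : nat -> nat -> nat) (g : pfun 1) (t : 1.-tuple nat) c :
  mu_spec (fun s : 2.-tuple nat => Some (q (nth 0 s 0) (nth 0 s 1))) g ->
  g t = Some c <-> q (nth 0 t 0) c = 0 /\ forall d, q (nth 0 t 0) d = 0 -> c <= d.
Proof.
move=> Hg; case/tupleP: t => x t; rewrite tuple0 Hg /=.
split=> [[[Hc] Hlt]|[Hc Hmin]]; split=> //.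
- by move=> d Hd; rewrite leqNgt; apply/negP => /Hlt [v]; rewrite Hd.
- by rewrite Hc.
- move=> d Hd; exists (q x d).-1; rewrite prednK // lt0n; apply/eqP => /Hmin.
  by rewrite leqNgt Hd.
Qed.

(** Functions on [seq nat] stand for functions of every arity at once: at
    arity [k] only tuples of size [k] matter. *)
Definition lfun := seq nat -> option nat.

Definition in_class (C : pclass) k (h : lfun) := C k (fun t : k.-tuple nat => h t).

Definition total_in (C : pclass) k (a : seq nat -> nat) := in_class C k (fun s => Some (a s)).

Definition fun1 (f : nat -> nat) (s : seq nat) := f (nth 0 s 0).
Definition fun2 (f : nat -> nat -> nat) (s : seq nat) := f (nth 0 s 0) (nth 0 s 1).

Definition lift k (f : pfun k) : lfun := fun s => f [tuple nth 0 s i | i < k].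

Lemma in_class_ext C k (f : pfun k) (h : lfun) :
  C k f -> (forall t : k.-tuple nat, f t = h t) -> in_class C k h.
Proof. by move=> Hf E; rewrite /in_class -(functional_extensionality f _ E). Qed.

Lemma lift_tuple k (f : pfun k) (s : seq nat) (t : k.-tuple nat) : s = t -> lift f s = f t.
Proof.
by move=> ->; congr f; apply: eq_from_tnth => i; rewrite tnth_mktuple (tnth_nth 0).
Qed.

Lemma in_class_lift C k (f : pfun k) : in_class C k (lift f) <-> C k f.
Proof.
by rewrite /in_class (functional_extensionality (fun t : k.-tuple nat => lift f t) f
  (fun t => lift_tuple f erefl)).
Qed.

Definition undef : lfun := fun=> None.

Definition ocomp (gl : seq lfun) (h : lfun) : lfun := fun s =>
  if all (fun g => g s != None) gl then h [seq odflt 0 (g s) | g <- gl] else None.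

Lemma comp_spec_ocomp n (h : lfun) (gl : seq lfun) :
  comp_spec (fun t : (size gl).-tuple nat => h t)
    (fun i (t : n.-tuple nat) => nth undef gl i t) (fun t => ocomp gl h t).
Proof.
move=> x y; rewrite /ocomp; case: ifP => [/(all_nthP undef) Hall|Hnone].
- split=> [Hh|[vs [Hg <-]]].
  + have sz : size [seq odflt 0 (g x) | g : lfun <- gl] == size gl by rewrite size_map.
    exists (Tuple sz); split=> // i; rewrite (tnth_nth 0) /= (nth_map undef) //.
    by move: (Hall i (ltn_ord i)); case: (nth _ gl i x).
  + congr h; apply: (eq_from_nth (x0 := 0)) => [|i]; first by rewrite size_map size_tuple.
    rewrite size_map => Hi; rewrite (nth_map undef) //.
    by rewrite (Hg (Ordinal Hi)) /= (tnth_nth 0).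
- split=> // [[vs [Hg _]]]; move: Hnone; rewrite (introT (all_nthP undef)) //.
  by move=> i Hi; rewrite (Hg (Ordinal Hi)).
Qed.

Lemma opt_ext (o1 o2 : option nat) : (forall y, o1 = Some y <-> o2 = Some y) -> o1 = o2.
Proof.
case: o1 => [a|]; case: o2 => [b|] // H.
- by case: (H a) => /(_ erefl) [->].
- by case: (H a) => /(_ erefl).
- by case: (H b) => _ /(_ erefl).
Qed.

Lemma comp_specE m n (h : pfun m) (gs : 'I_m -> pfun n) (f : pfun n) (x : n.-tuple nat) :
  comp_spec h gs f ->
  f x = if all (fun i => gs i x != None) (enum 'I_m)
        then h [tuple odflt 0 (gs i x) | i < m] else None.
Proof.
move=> Hc; apply: opt_ext => y; rewrite Hc; case: ifP => [/allP Hall|Hnone]; split=> //.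
- by case=> vs [Hg <-]; congr h; apply: eq_from_tnth => i; rewrite tnth_mktuple Hg.
- move=> Hh; exists [tuple odflt 0 (gs i x) | i < m]; split=> // i; rewrite tnth_mktuple.
  by move: (Hall i (mem_enum _ i)); case: (gs i x).
- by case=> vs [Hg _]; move: Hnone; rewrite (introT allP) // => i _; rewrite Hg.
Qed.

Lemma ocomp_total (al : seq (seq nat -> nat)) (h : lfun) (s : seq nat) :
  ocomp [seq (fun s => Some (a s)) | a <- al] h s = h [seq a s | a <- al].
Proof.
by rewrite /ocomp all_map (eq_all (a2 := predT)) // all_predT -map_comp.
Qed.

Lemma In_nth T (x0 : T) (s : seq T) i : i < size s -> List.In (nth x0 s i) s.
Proof. by elim: s i => [|x s IH] [|i] //= Hi; [left|right; apply: IH]. Qed.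

Section Composition.

Variable C : pclass.
Hypothesis C_comp : comp_closed C.

Lemma in_class_comp n (h : lfun) (gl : seq lfun) :
  in_class C (size gl) h -> (forall g, List.In g gl -> in_class C n.+1 g) -> 0 < size gl ->
  in_class C n.+1 (ocomp gl h).
Proof.
move=> Hh Hgl Hm.
have Hgs (i : 'I_(size gl)) : in_class C n.+1 (nth undef gl i) by exact/Hgl/In_nth.
exact: C_comp Hm (ltn0Sn n) Hh Hgs (comp_spec_ocomp h gl).
Qed.

Lemma in_class_comp_total n (h : lfun) (al : seq (seq nat -> nat)) :
  in_class C (size al) h -> (forall a, List.In a al -> total_in C n.+1 a) -> 0 < size al ->
  in_class C n.+1 (fun s => h [seq a s | a <- al]).
Proof.
move=> Hh Hal Hm.
have Hc : in_class C n.+1 (ocomp [seq (fun s => Some (a s)) | a <- al] h).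
  apply: in_class_comp; rewrite ?size_map //.
  by move=> g /List.in_map_iff [a [<- /Hal]].
exact: in_class_ext Hc (fun t => ocomp_total al h t).
Qed.

Lemma in_class_comp1 n (h : lfun) (a : seq nat -> nat) :
  in_class C 1 h -> total_in C n.+1 a -> in_class C n.+1 (fun s => h [:: a s]).
Proof. by move=> Hh Ha; apply: (in_class_comp_total (al := [:: a])) => // b [<-|[]]. Qed.

Lemma in_class_comp2 n (h : lfun) (a b : seq nat -> nat) :
  in_class C 2 h -> total_in C n.+1 a -> total_in C n.+1 b ->
  in_class C n.+1 (fun s => h [:: a s; b s]).
Proof.
by move=> Hh Ha Hb; apply: (in_class_comp_total (al := [:: a; b])) => // c [<-|[<-|[]]].
Qed.

Lemma total_in_comp1 n (f : nat -> nat) (a : seq nat -> nat) :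
  total_in C 1 (fun1 f) -> total_in C n.+1 a -> total_in C n.+1 (fun s => f (a s)).
Proof. exact: in_class_comp1. Qed.

Lemma total_in_comp2 n (f : nat -> nat -> nat) (a b : seq nat -> nat) :
  total_in C 2 (fun2 f) -> total_in C n.+1 a -> total_in C n.+1 b ->
  total_in C n.+1 (fun s => f (a s) (b s)).
Proof. exact: in_class_comp2. Qed.

End Composition.

Definition cpair a b := 'C((a + b).+1, 2) + b.

Lemma cdiag_ex z : exists s, z < 'C(s.+2, 2).
Proof. by exists z; elim: z => // z IH; rewrite binS bin1; lia. Qed.

(* Cantor unpairing: [z] lies on the diagonal [cdiag z], i.e. [z = cpair a b] with
   [a + b = cdiag z]. *)
Definition cdiag z := ex_minn (cdiag_ex z).
Definition csnd z := z - 'C((cdiag z).+1, 2).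
Definition cfst z := cdiag z - csnd z.

Lemma cdiag_pair a b : cdiag (cpair a b) = a + b.
Proof.
rewrite /cdiag; case: ex_minnP => s Hs Hmin; apply/eqP; rewrite eqn_leq; apply/andP; split.
- by apply: Hmin; have := binS (a + b).+1 1; rewrite bin1 /cpair; lia.
- rewrite leqNgt; apply/negP => Hlt.
  by have := leq_bin2l 2 (Hlt : s.+2 <= (a + b).+1); rewrite /cpair in Hs; lia.
Qed.

Lemma csnd_pair a b : csnd (cpair a b) = b.
Proof. by rewrite /csnd cdiag_pair /cpair addKn. Qed.

Lemma cfst_pair a b : cfst (cpair a b) = a.
Proof. by rewrite /cfst csnd_pair cdiag_pair addnK. Qed.

Definition chi (A : nat -> bool) (x : nat) : nat := A x.

Section Arithmetic.

Variable O : option (nat -> bool).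
Local Notation PR := (@PRgen O).
Local Notation PR_comp := (@PRgen_comp_closed O).

Lemma total_in_proj k i : total_in PR k (fun s => nth 0 s i).
Proof.
case: (ltnP i k) => Hi.
- by apply: (in_class_ext (PR_proj O (Ordinal Hi))) => t; rewrite /= (tnth_nth 0).
- by apply: (in_class_ext (PR_zero O k)) => t; rewrite nth_default // size_tuple.
Qed.

Lemma total_in_zero k : total_in PR k (fun=> 0).
Proof. exact: PR_zero. Qed.

Lemma total_in_succ : total_in PR 1 (fun1 succn).
Proof. by apply: (in_class_ext (PR_succ O)) => t; case/tupleP: t => x t; rewrite tuple0. Qed.

Lemma total_in_const k n : total_in PR k.+1 (fun=> n).
Proof.
elim: n => [|n IH]; first exact: total_in_zero.
exact: (total_in_comp1 PR_comp total_in_succ IH).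
Qed.

Lemma total_in_iter (f : nat -> nat) :
  total_in PR 1 (fun1 f) -> total_in PR 2 (fun2 (fun x y => iter y f x)).
Proof.
move=> Hf; have Hh := total_in_comp1 PR_comp Hf (total_in_proj 3 2).
apply: (PR_prim (total_in_proj 1 0) Hh) => x y; case/tupleP: x => x t; rewrite tuple0.
by elim: y => //= y <-.
Qed.

Lemma total_in_iteri (g : nat -> nat -> nat) :
  total_in PR 2 (fun2 g) -> total_in PR 1 (fun1 (fun y => iteri y g 0)).
Proof.
move=> Hg; apply: (PR_prim (total_in_zero 0) Hg) => x y; rewrite tuple0.
by elim: y => //= y <-.
Qed.

Lemma total_in_pred : total_in PR 1 (fun1 predn).
Proof.
apply: (in_class_ext (total_in_iteri (g := fun y _ => y) (total_in_proj 2 0))) => t.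
by rewrite /fun1; case: (nth 0 t 0).
Qed.

Lemma total_in_add : total_in PR 2 (fun2 addn).
Proof.
by apply: (in_class_ext (total_in_iter total_in_succ)) => t; rewrite /fun2 iter_succn.
Qed.

Lemma total_in_sub : total_in PR 2 (fun2 subn).
Proof.
by apply: (in_class_ext (total_in_iter total_in_pred)) => t; rewrite /fun2 iter_predn.
Qed.

Lemma total_in_bin2 : total_in PR 1 (fun1 (fun y => 'C(y, 2))).
Proof.
apply: (in_class_ext (total_in_iteri total_in_add)) => t; congr Some.
by rewrite /fun1; elim: (nth 0 t 0) => //= y ->; rewrite binS bin1 addnC.
Qed.

Lemma total_in_eqn : total_in PR 2 (fun2 (fun x y => nat_of_bool (x == y))).
Proof.
have Hdist : total_in PR 2 (fun s => (nth 0 s 0 - nth 0 s 1) + (nth 0 s 1 - nth 0 s 0)).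
  apply: (total_in_comp2 PR_comp total_in_add) => //;
    exact: (total_in_comp2 PR_comp total_in_sub (total_in_proj 2 _) (total_in_proj 2 _)).
apply: (in_class_ext (total_in_comp2 PR_comp total_in_sub (total_in_const 1 1) Hdist)).
by move=> t; congr Some; rewrite /fun2; case: eqP => [->|]; rewrite ?subnn //=; lia.
Qed.

Lemma total_in_cdiag : total_in PR 1 (fun1 cdiag).
Proof.
pose q z s := z.+1 - 'C(s.+2, 2).
have Hsucc := total_in_comp1 PR_comp total_in_succ.
have Hq : total_in PR 2 (fun2 q).
  apply: (total_in_comp2 PR_comp total_in_sub) => //; first exact: (Hsucc _ _ (total_in_proj 2 0)).
  exact: (total_in_comp1 PR_comp total_in_bin2 (Hsucc _ _ (Hsucc _ _ (total_in_proj 2 1)))).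
have [g Hg] := mu_exists (fun s : 2.-tuple nat => Some (fun2 q s)).
apply: (in_class_ext (PR_mu Hq Hg)) => t; apply/(mu_least t _ Hg).
rewrite /fun1 /cdiag; case: ex_minnP => s Hs Hmin; rewrite /q; split.
- by apply/eqP; rewrite subn_eq0.
- by move=> d /eqP; rewrite subn_eq0 => /Hmin.
Qed.

Lemma total_in_csnd : total_in PR 1 (fun1 csnd).
Proof.
apply: (total_in_comp2 PR_comp total_in_sub (total_in_proj 1 0)) => //.
exact: (total_in_comp1 PR_comp total_in_bin2 (total_in_comp1 PR_comp total_in_succ total_in_cdiag)).
Qed.

Lemma total_in_cfst : total_in PR 1 (fun1 cfst).
Proof. exact: (total_in_comp2 PR_comp total_in_sub total_in_cdiag total_in_csnd). Qed.

Lemma total_in_cpair : total_in PR 2 (fun2 cpair).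
Proof.
apply: (total_in_comp2 PR_comp total_in_add _ (total_in_proj 2 1)) => //.
exact: (total_in_comp1 PR_comp total_in_bin2 (total_in_comp1 PR_comp total_in_succ total_in_add)).
Qed.

(* [f x] is [v c] for the least code [c] in [R] with [u c = x], found by unbounded search. *)
Lemma in_class_search (R : nat -> bool) (u v : nat -> nat) (f : lfun) :
  total_in PR 1 (fun1 (chi R)) -> total_in PR 1 (fun1 u) -> total_in PR 1 (fun1 v) ->
  (forall x y, f [:: x] = Some y <-> exists c, [/\ R c, u c = x & v c = y]) ->
  in_class PR 1 f.
Proof.
move=> HR Hu Hv Hf.
pose q x c := (1 - chi R c) + (1 - (u c == x)).
have q0 x c : (q x c == 0) = R c && (u c == x).
  by rewrite /q /chi; case: (R c); case: (u c == x).
have Hq : total_in PR 2 (fun2 q).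
  have Hneg a : total_in PR 2 a -> total_in PR 2 (fun s => 1 - a s).
    by move=> Ha; exact: (total_in_comp2 PR_comp total_in_sub (total_in_const 1 1) Ha).
  apply: (total_in_comp2 PR_comp total_in_add) => //; apply: Hneg.
    exact: (total_in_comp1 PR_comp HR (total_in_proj 2 1)).
  apply: (total_in_comp2 PR_comp total_in_eqn _ (total_in_proj 2 0)) => //.
  exact: (total_in_comp1 PR_comp Hu (total_in_proj 2 1)).
have [g Hg] := mu_exists (fun s : 2.-tuple nat => Some (fun2 q s)).
have Hvg : in_class PR 1 (ocomp [:: lift g] (fun s => Some (fun1 v s))).
  apply: (in_class_comp (gl := [:: lift g]) PR_comp Hv) => // h [<-|[]].
  exact/in_class_lift/(PR_mu Hq Hg).
apply: (in_class_ext Hvg) => t; case/tupleP: t => x t; rewrite tuple0.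
rewrite /ocomp /= (lift_tuple g (t := [tuple x])) //.
case Eg : (g [tuple x]) => [c|] /=.
- move/(mu_least _ _ Hg): Eg => [/eqP]; rewrite q0 => /andP [Rc /eqP ucx] _.
  by symmetry; apply/Hf; exists c.
- case Ef : (f [:: x]) => [y|] //; have [c [Rc ucx _]] := (Hf x y).1 Ef.
  have Hex : exists c, q x c == 0 by exists c; rewrite q0 Rc ucx eqxx.
  case: (ex_minnP Hex) => c' /eqP Hc' Hmin.
  have : g [tuple x] = Some c' by apply/(mu_least _ _ Hg); split=> // d /eqP /Hmin.
  by rewrite Eg.
Qed.

End Arithmetic.

Definition pair_last k (f : lfun) : lfun :=
  fun s => f (take k s ++ [:: cfst (nth 0 s k); csnd (nth 0 s k)]).

Definition unpair_last k (g : lfun) : lfun :=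
  fun s => g (take k s ++ [:: cpair (nth 0 s k) (nth 0 s k.+1)]).

Lemma map_proj_take k (s : seq nat) :
  k <= size s -> [seq a s | a <- mkseq (fun i s => nth 0 s i) k] = take k s.
Proof. by move=> Hk; rewrite -map_comp map_nth_iota0. Qed.

Lemma pair_lastK k (f : lfun) (t : k.+2.-tuple nat) : unpair_last k (pair_last k f) t = f t.
Proof.
have Hk : size (take k t) = k by rewrite size_takel // size_tuple -addn2 leq_addr.
rewrite /unpair_last /pair_last take_size_cat // nth_cat Hk ltnn subnn /=.
rewrite cfst_pair csnd_pair -[in RHS](cat_take_drop k t); congr (f (_ ++ _)).
have Ht := size_tuple t.
by rewrite (drop_nth 0) ?(drop_nth 0 (n := k.+1)) ?drop_oversize ?Ht.
Qed.

Section Substitution.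

Variable C : pclass.
Hypothesis C_comp : comp_closed C.
Hypothesis C_pr : contains_pr C.

Lemma total_in_pr k (a : seq nat -> nat) : total_in (@PRgen None) k.+1 a -> total_in C k.+1 a.
Proof. exact: C_pr. Qed.

Lemma total_in_projs k n a :
  List.In a (mkseq (fun i s => nth 0 s i) n) -> total_in C k.+1 a.
Proof. by case/List.in_map_iff => i [<- _]; apply/total_in_pr/total_in_proj. Qed.

Lemma in_class_prefix k n (h : lfun) (al : seq (seq nat -> nat)) :
  k <= n.+1 -> 0 < k + size al -> in_class C (k + size al) h ->
  (forall a, List.In a al -> total_in C n.+1 a) ->
  in_class C n.+1 (fun s => h (take k s ++ [seq a s | a <- al])).
Proof.
move=> Hkn Hm Hh Hal; pose prj := mkseq (fun i s => nth 0 s i) k.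
have Hsize : size (prj ++ al) = k + size al by rewrite size_cat size_mkseq.
have Hprj a : List.In a (prj ++ al) -> total_in C n.+1 a.
  by case/List.in_app_iff => [/total_in_projs|/Hal].
rewrite -Hsize in Hm Hh; apply: (in_class_ext (in_class_comp_total C_comp Hh Hprj Hm)) => t.
by rewrite map_cat map_proj_take // size_tuple.
Qed.

Lemma in_class_pair_last k (f : lfun) : in_class C k.+2 f -> in_class C k.+1 (pair_last k f).
Proof.
move=> Hf; apply: (in_class_prefix (al := [:: _; _]) (leqnSn k)); rewrite ?addn2 //.
move=> a [<-|[<-|[]]]; apply: total_in_pr.
- exact: (total_in_comp1 (@PRgen_comp_closed None) (total_in_cfst None) (total_in_proj None _ k)).
- exact: (total_in_comp1 (@PRgen_comp_closed None) (total_in_csnd None) (total_in_proj None _ k)).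
Qed.

Lemma in_class_unpair_last k (g : lfun) : in_class C k.+1 g -> in_class C k.+2 (unpair_last k g).
Proof.
move=> Hg; apply: (in_class_prefix (al := [:: _]) (leqW (leqnSn k))); rewrite ?addn1 //.
move=> a [<-|[]]; apply: total_in_pr.
exact: (total_in_comp2 (@PRgen_comp_closed None) (total_in_cpair None)
  (total_in_proj None _ k) (total_in_proj None _ k.+1)).
Qed.

End Substitution.

Lemma class_sub_of_unary (C1 C2 : pclass) :
  comp_closed C1 -> contains_pr C1 -> comp_closed C2 -> contains_pr C2 ->
  (forall f : pfun 1, C1 1 f -> C2 1 f) -> forall k (f : pfun k.+1), C1 k.+1 f -> C2 k.+1 f.
Proof.
move=> C1_comp C1_pr C2_comp C2_pr Hunary; elim=> [|k IH] f; first exact: Hunary.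
move=> /(in_class_lift C1 f).2/(in_class_pair_last C1_comp C1_pr) Hp.
apply/in_class_lift; apply: (in_class_ext (in_class_unpair_last C2_comp C2_pr (IH _ Hp))).
exact: pair_lastK.
Qed.

Section Relativization.

Variables (C : pclass) (A : nat -> bool).
Hypotheses (C_comp : comp_closed C) (C_prim : primrec_closed C) (C_mu : mu_closed C).
Hypotheses (C_pr : contains_pr C) (C_A : total_in C 1 (fun1 (chi A))).

(* The dummy first argument keeps all arities positive, which is all [C] is closed under. *)
Definition pad k (f : pfun k) : lfun := fun s => lift f (behead s).

Lemma in_class_pad k (f : pfun k) : PRgen (Some A) f -> in_class C k.+1 (pad f).
Proof.
elim=> {k f}.
- by move=> k; apply: (in_class_ext (total_in_pr C_pr (total_in_zero None k.+1))).
- apply: (in_class_ext (total_in_pr C_pr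
    (total_in_comp1 (@PRgen_comp_closed None) (total_in_succ None) (total_in_proj None 2 1)))).
  by move=> t; rewrite /pad /lift /thead tnth_mktuple nth_behead.
- move=> k i; apply: (in_class_ext (total_in_pr C_pr (total_in_proj None k.+1 i.+1))) => t.
  by rewrite /pad /lift tnth_mktuple nth_behead.
- move=> A' [<-]; apply: (in_class_ext (total_in_comp1 C_comp C_A
    (total_in_pr C_pr (total_in_proj None 2 1)))) => t.
  by rewrite /pad /lift /thead tnth_mktuple nth_behead.
- move=> m n h gs f _ IHh _ IHgs Hc.
  pose gl := (fun=> Some 0) :: [seq pad (gs i) | i <- enum 'I_m].
  have Hh : in_class C (size gl) (pad h) by rewrite /= size_map size_enum_ord.
  have Hgl : in_class C n.+1 (ocomp gl (pad h)).
    apply: (in_class_comp C_comp Hh) => //.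
    move=> g [<-|/List.in_map_iff [i [<- _]]] //.
    exact: (total_in_pr C_pr (total_in_zero None n.+1)).
  apply: (in_class_ext Hgl) => t; case/tupleP: t => z x.
  rewrite /pad /ocomp /= (lift_tuple f (t := x)) // (comp_specE _ Hc) all_map.
  have Egs i : lift (gs i) x = gs i x by rewrite (lift_tuple _ (t := x)).
  rewrite (eq_all (a2 := fun i => gs i x != None)) => [|i]; last by rewrite /pad /= Egs.
  case: ifP => // _; rewrite -map_comp (lift_tuple h (t := [tuple odflt 0 (gs i x) | i < m])) //=.
  by apply: eq_map => i; rewrite /pad /= Egs.
- move=> n g h f _ IHg _ IHh Hs.
  apply: (C_prim (ltn0Sn n) IHg IHh) => x y; case/tupleP: x => z x.
  rewrite /pad /= (lift_tuple f (t := [tuple of rcons x y])) // Hs.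
  elim: y => [|y IH] /=; first by rewrite (lift_tuple g (t := x)).
  rewrite IH; case: (prec_aux _ _ _ y) => // v.
  by rewrite (lift_tuple h (t := [tuple of rcons [tuple of rcons x y] v])).
- move=> n g f _ IHg Hs.
  apply: (C_mu (ltn0Sn n) IHg) => x y; case/tupleP: x => z x.
  rewrite /pad /= (lift_tuple f (t := x)) // Hs (lift_tuple g (t := [tuple of rcons x y])) //.
  have Eg w : lift g (rcons x w) = g [tuple of rcons x w].
    by rewrite (lift_tuple g (t := [tuple of rcons x w])).
  by split=> -[H1 H2]; split=> // w /H2 [v Hv]; exists v; rewrite ?Eg // -Eg.
Qed.

End Relativization.

Lemma relative_sub (C : pclass) (A : nat -> bool) :
  comp_closed C -> primrec_closed C -> mu_closed C -> contains_pr C ->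
  total_in C 1 (fun1 (chi A)) -> forall k (f : pfun k), 0 < k -> PRgen (Some A) f -> C k f.
Proof.
move=> C_comp C_prim C_mu C_pr C_A [//|k] f _.
move/(in_class_pad C_comp C_prim C_mu C_pr C_A) => Hf; apply/in_class_lift.
have Hal a : List.In a ((fun=> 0) :: mkseq (fun i s => nth 0 s i) k.+1) -> total_in C k.+1 a.
  case=> [<-|Ha]; last exact: (@total_in_projs _ C_pr k k.+1 _ Ha).
  exact: (total_in_pr C_pr (total_in_zero None k.+1)).
have Hsize : size ((fun=> 0) :: mkseq (fun i s => nth 0 s i) k.+1) = k.+2.
  exact: (congr1 S (size_mkseq (fun i s => nth 0 s i) k.+1)).
rewrite -Hsize in Hf; apply: (in_class_ext (in_class_comp_total C_comp Hf Hal isT)) => t.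
rewrite /pad behead_map (_ : behead _ = mkseq (fun i s => nth 0 s i) k.+1) //.
by rewrite map_proj_take ?size_tuple // take_oversize ?size_tuple.
Qed.

(* Primitive recursion on the flag is a lazy conditional: [g] is only evaluated when the
   flag is nonzero, whereas composition would require [g] to be defined everywhere. *)
Lemma in_class_guard (C : pclass) (g : lfun) :
  comp_closed C -> primrec_closed C -> contains_pr C -> in_class C 1 g ->
  in_class C 2 (fun s => if nth 0 s 1 is 0 then Some 0 else g [:: nth 0 s 0]).
Proof.
move=> C_comp C_prim C_pr Hg.
have Hstep := in_class_comp1 C_comp Hg (total_in_pr C_pr (total_in_proj None 3 0)).
apply: (C_prim _ _ _ _ (ltn0Sn 0) (total_in_pr C_pr (total_in_zero None 1)) Hstep) => x y.
case/tupleP: x => x t; rewrite tuple0.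
elim: y => [|y IH] //=; rewrite -IH.
by case: y {IH} => [|y] //=; case: (g _).
Qed.

Definition rec_out (al om : pfun 1) (m : nat) : option nat :=
  match unary al m, unary om m with Some x, Some y => Some (cpair x y) | _, _ => None end.

(* [c = cpair m (cpair x y)] is in [record_set M al om] iff [m] is a record in [M] of a
   computation with input [x] and output [y]. *)
Definition record_set (M : nat -> bool) (al om : pfun 1) (c : nat) : bool :=
  M (cfst c) && (rec_out al om (cfst c) == Some (csnd c)).

Lemma record_set_graph (G al om : pfun 1) (M : nat -> bool) :
  (forall x y, unary G x = Some y <->
     exists m, [/\ M m, unary al m = Some x & unary om m = Some y]) ->
  forall x y, unary G x = Some y <->
    exists c, [/\ record_set M al om c, cfst (csnd c) = x & csnd (csnd c) = y].
Proof.
move=> HG x y; rewrite HG; split=> [[m [Mm Hx Hy]]|[c [/andP [Mc /eqP Hc] Hx Hy]]].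
- exists (cpair m (cpair x y)).
  by rewrite /record_set !csnd_pair !cfst_pair /rec_out Mm Hx Hy eqxx.
- exists (cfst c); move: Hc; rewrite /rec_out.
  case: (unary al _) => [a|] //; case: (unary om _) => [b|] // [Hab].
  by rewrite -Hx -Hy -Hab cfst_pair csnd_pair.
Qed.

Lemma total_in_record_set (C : pclass) (M : nat -> bool) (al om : pfun 1) :
  comp_closed C -> primrec_closed C -> contains_pr C -> C 1 al -> C 1 om ->
  (forall m, M m -> unary al m <> None /\ unary om m <> None) ->
  C 1 (fun t => Some (nat_of_bool (M (thead t)))) ->
  total_in C 1 (fun1 (chi (record_set M al om))).
Proof.
move=> C_comp C_prim C_pr C_al C_om Hdef C_M.
have C_chiM : total_in C 1 (fun1 (chi M)).
  by apply: (in_class_ext C_M) => t; rewrite /thead (tnth_nth 0).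
have C_out : in_class C 1 (fun s => rec_out al om (nth 0 s 0)).
  have Hgl g : List.In g [:: lift al; lift om] -> in_class C 1 g.
    by case=> [<-|[<-|[]]]; apply/in_class_lift.
  have := in_class_comp (gl := [:: lift al; lift om]) C_comp
    (total_in_pr C_pr (total_in_cpair None)) Hgl isT.
  move/in_class_ext; apply=> t.
  case/tupleP: t => x t; rewrite tuple0 /ocomp /rec_out /unary /=.
  rewrite (lift_tuple al (t := [tuple x])) // (lift_tuple om (t := [tuple x])) //.
  by case: (al _) => [a|]; case: (om _).
have C_test : in_class C 1 (ocomp [:: fun s => rec_out al om (cfst (nth 0 s 0));
                                    fun s => Some (csnd (nth 0 s 0))]
                                 (fun s => Some (fun2 (fun a b => nat_of_bool (a == b)) s))).
  apply: (in_class_comp C_comp) => // [|g [<-|[<-|[]]]].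
  - exact: (total_in_pr C_pr (total_in_eqn None)).
  - exact: (in_class_comp1 C_comp C_out (total_in_pr C_pr (total_in_cfst None))).
  - exact: (total_in_pr C_pr (total_in_csnd None)).
have C_flag : total_in C 1 (fun s => chi M (cfst (nth 0 s 0))).
  exact: (total_in_comp1 C_comp C_chiM (total_in_pr C_pr (total_in_cfst None))).
apply: (in_class_ext (in_class_comp2 C_comp (in_class_guard C_comp C_prim C_pr C_test)
  (total_in_pr C_pr (total_in_proj None 1 0)) C_flag)).
move=> t; rewrite /fun1 /chi /record_set /=; set c := nth 0 t 0.
case HM : (M (cfst c)) => //=; rewrite /ocomp /=.
have [r ->] : exists r, rec_out al om (cfst c) = Some r.
  move: (Hdef _ HM); rewrite /rec_out.
  by case: (unary al _) => [a|] [//]; case: (unary om _) => [b|] //; exists (cpair a b).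
by [].
Qed.

Definition uncurry_pair (F : pfun 2) : pfun 1 :=
  fun t => lift F [:: cfst (nth 0 t 0); csnd (nth 0 t 0)].

Lemma in_class_uncurry_pair (C : pclass) (F : pfun 2) :
  comp_closed C -> contains_pr C -> C 2 F -> C 1 (uncurry_pair F).
Proof.
move=> C_comp C_pr /(in_class_lift C F).2 HF.
exact: (in_class_comp2 C_comp HF (total_in_pr C_pr (total_in_cfst None))
                                  (total_in_pr C_pr (total_in_csnd None))).
Qed.

Lemma relative_of_records (G al om : pfun 1) (M : nat -> bool) :
  (forall x y, unary G x = Some y <->
     exists m, [/\ M m, unary al m = Some x & unary om m = Some y]) ->
  PRgen (Some (record_set M al om)) G.
Proof.
move=> HG; set A := record_set M al om.
have PR_A : total_in (@PRgen (Some A)) 1 (fun1 (chi A)).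
  by apply: (in_class_ext (PR_oracle (A := A) erefl)) => t; rewrite /thead (tnth_nth 0).
have PR_csnd2 g : total_in (@PRgen (Some A)) 1 (fun1 g) ->
                  total_in (@PRgen (Some A)) 1 (fun1 (fun c => g (csnd c))).
  by move=> Hg; exact: (total_in_comp1 (@PRgen_comp_closed _) Hg (total_in_csnd _)).
apply/in_class_lift.
apply: (in_class_search PR_A (PR_csnd2 _ (total_in_cfst _)) (PR_csnd2 _ (total_in_csnd _))).
by move=> x y; rewrite (lift_tuple G (t := [tuple x])) //; exact: record_set_graph.
Qed.

Lemma relative_of_program (F : pfun 2) (A : nat -> bool) (f : pfun 1) n :
  PRgen (Some A) (uncurry_pair F) -> (forall x, F [tuple n; x] = unary f x) -> PRgen (Some A) f.
Proof.
move=> /(in_class_lift _ (uncurry_pair F)).2 HF Hn; apply/in_class_lift.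
have Hcode : total_in (@PRgen (Some A)) 1 (fun s => cpair n (nth 0 s 0)).
  exact: (total_in_comp2 (@PRgen_comp_closed _) (total_in_cpair _) (total_in_const _ 0 n)
                                                   (total_in_proj _ 1 0)).
apply: (in_class_ext (in_class_comp1 (@PRgen_comp_closed _) HF Hcode)) => t.
case/tupleP: t => x t; rewrite tuple0 /=.
rewrite (lift_tuple _ (t := [tuple cpair n x])) // /uncurry_pair /= cfst_pair csnd_pair.
by rewrite (lift_tuple F (t := [tuple n; x])) // Hn (lift_tuple f (t := [tuple x])).
Qed.

Theorem mainTheorem1 (K : pclass) :
  (* (1) closure *)
  (forall k (f : pfun k), 0 < k -> partial_recursive f -> K k f) ->
  (forall m n (h : pfun m) (gs : 'I_m -> pfun n) (f : pfun n),
      0 < m -> 0 < n -> K m h -> (forall i, K n (gs i)) -> comp_spec h gs f -> K n f) ->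
  (forall n (g : pfun n) (h : pfun n.+2) (f : pfun n.+1),
      0 < n -> K n g -> K n.+2 h -> primrec_spec g h f -> K n.+1 f) ->
  (forall n (g : pfun n.+1) (f : pfun n),
      0 < n -> K n.+1 g -> mu_spec g f -> K n f) ->
  (* (2) computation records *)
  (forall f : pfun 1, K 1 f ->
     exists (M : nat -> bool) (al om : pfun 1),
       [/\ K 1 al, K 1 om,
           (forall m, M m -> unary al m <> None /\ unary om m <> None),
           K 1 (fun t => Some (nat_of_bool (M (thead t)))) &
           forall x y, unary f x = Some y <->
             exists m, [/\ M m, unary al m = Some x & unary om m = Some y]]) ->
  (* (3) programs *)
  (exists F : pfun 2, K 2 F /\
     forall f : pfun 1, K 1 f -> exists n, forall x, F [tuple n; x] = unary f x) ->
  exists A : nat -> bool,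
    forall k (f : pfun k), 0 < k -> (K k f <-> partial_recursive_in A f).
Proof.
move=> K_pr K_comp K_prim K_mu K_rec [F [K_F F_univ]].
have [M [al [om [K_al K_om Hdef K_M HG]]]] := K_rec _ (in_class_uncurry_pair K_comp K_pr K_F).
exists (record_set M al om) => k f Hk; split.
- case: k f Hk => // k f _.
  apply: (class_sub_of_unary K_comp K_pr (@PRgen_comp_closed _) (@PRgen_contains_pr _)).
  move=> g /F_univ [n Hn]; exact: relative_of_program (relative_of_records HG) Hn.
- apply: (relative_sub K_comp K_prim K_mu K_pr _ Hk).
  exact: total_in_record_set K_comp K_prim K_pr K_al K_om Hdef K_M.
Qed.
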